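(* Consider the FlexPD-F iterates described in the context with $\alpha,\beta>0$, integer $T\ge1$, and $U=I-\alpha B$. If $\alpha<1/\rho(B)$, then for any $d,e,g>1$ and every $k\ge0$, \[\|\lambda^{k+1}-\lambda^*\|^2\le \frac{d}{\alpha^2 s(AA')}\Big(\frac{e}{e-1}\rho(U^2)+e\alpha^2L^2\Big)\|x^{k+1,T-1}-x^{k+1,T}\|^2+\frac{d}{(d-1)\alpha^2 s(AA')}\Big(\frac{g}{g-1}\alpha^2\rho\big((\beta A'A-B)^2\big)+g\alpha^2L^2\Big)\|x^{k+1,T}-x^*\|^2.\]
   Context: Setting: $n$ agents are connected by a connected undirected graph with edge set $\mathcal E$, $\epsilon=|\mathcal E|$. For $x\in\mathbb R^n$ let $f(x)=\sum_{i=1}^n f_i(x_i)$, where each $f_i:\mathbb R\to\mathbb R$ is twice differentiable with $m\le f_i''\le L$ for constants $0<m\le L$; $\nabla f(x)=(f_1'(x_1),\dots,f_n'(x_n))'$. $A\in\mathbb R^{\epsilon\times n}$ is the edge–node incidence matrix (null space spanned by the all-ones vector). $B\in\mathbb R^{n\times n}$ is symmetric positive semidefinite with the same null space as $A$, off-diagonal entries nonzero only on edges. $x^*$ is the unique minimizer of $f$ subject to $Ax=0$ and $\lambda^*$ a Lagrange multiplier with $\nabla f(x^* )+A'\lambda^*=0$, $Ax^*=0$, $Bx^*=0$, chosen in the column space of $A$ (orthogonal to the null space of $A'$). FlexPD-F: given $\alpha,\beta>0$, $T\ge1$, $x^0$ arbitrary, $\lambda^0=0$; for $k\ge0$: $x^{k+1,0}=x^k$,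 $x^{k+1,t}=(I-\alpha B)x^{k+1,t-1}-\alpha\nabla f(x^{k+1,t-1})-\alpha A'\lambda^k$ for $t=1,\dots,T$, $x^{k+1}=x^{k+1,T}$, $\lambda^{k+1}=\lambda^k+\beta Ax^{k+1}$. Notation: $\rho(S)$ largest eigenvalue of a symmetric matrix $S$; $s(AA')$ smallest nonzero eigenvalue of $AA'$; $\|\cdot\|$ Euclidean norm. *)

From HB Require Import structures.
From mathcomp Require Import all_boot all_order all_algebra.
From mathcomp Require Import all_classical all_reals all_analysis.
Set Implicit Arguments. Unset Strict Implicit. Unset Printing Implicit Defensive.
Import Order.TTheory GRing.Theory Num.Theory.
Local Open Scope ring_scope.

Section FlexPD.
Variable R : realType.

Definition adj (n eps : nat) (E : 'I_eps -> 'I_n * 'I_n) : rel 'I_n :=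
  fun i j => [exists k, (E k == (i, j)) || (E k == (j, i))].

Definition simple_graph (n eps : nat) (E : 'I_eps -> 'I_n * 'I_n) : Prop :=
  (forall k, (E k).1 != (E k).2) /\
  (forall k k', (E k' = E k \/ E k' = ((E k).2, (E k).1)) -> k = k').

Definition connected_graph (n eps : nat) (E : 'I_eps -> 'I_n * 'I_n) : Prop :=
  forall i j, connect (adj E) i j.

Definition incidence (n eps : nat) (E : 'I_eps -> 'I_n * 'I_n) : 'M[R]_(eps, n) :=
  \matrix_(k, l) ((l == (E k).1)%:R - (l == (E k).2)%:R).

Definition sqnorm (p : nat) (v : 'cV[R]_p) : R := \sum_i (v i 0) ^+ 2.

Definition rho (p : nat) (S : 'M[R]_p) : R := sup [set a : R | eigenvalue S a].

Definition smin_nz (p : nat) (S : 'M[R]_p) : R :=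
  inf [set a : R | eigenvalue S a /\ a != 0].

Definition grad (n : nat) (f : 'I_n -> R -> R) (x : 'cV[R]_n) : 'cV[R]_n :=
  \col_i derive1 (f i) (x i 0).

Definition pstep (n eps : nat) (alpha : R) (A : 'M[R]_(eps, n)) (B : 'M[R]_n)
  (f : 'I_n -> R -> R) (lam : 'cV[R]_eps) (y : 'cV[R]_n) : 'cV[R]_n :=
  (1%:M - alpha *: B) *m y - alpha *: grad f y - alpha *: (A^T *m lam).

(* inner iterate x^{k+1,t} given x^{k+1,0} = y and lambda^k = lam *)
Definition inner (n eps : nat) (alpha : R) (A : 'M[R]_(eps, n)) (B : 'M[R]_n)
  (f : 'I_n -> R -> R) (lam : 'cV[R]_eps) (y : 'cV[R]_n) (t : nat) : 'cV[R]_n :=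
  iter t (pstep alpha A B f lam) y.

Fixpoint flexpd (n eps : nat) (alpha beta : R) (T : nat) (A : 'M[R]_(eps, n))
  (B : 'M[R]_n) (f : 'I_n -> R -> R) (x0 : 'cV[R]_n) (k : nat)
  : 'cV[R]_n * 'cV[R]_eps :=
  match k with
  | 0 => (x0, 0)
  | k'.+1 =>
      let p := flexpd alpha beta T A B f x0 k' in
      let xn := inner alpha A B f p.2 p.1 T in
      (xn, p.2 + beta *: (A *m xn))
  end.

End FlexPD.

From HB Require Import structures.
From mathcomp Require Import all_boot all_order all_algebra.
From mathcomp Require Import all_classical all_reals all_analysis.
From mathcomp Require Import complex spectral sesquilinear ring.
Import Order.TTheory GRing.Theory Num.Theory.
Local Open Scope ring_scope.
Set Implicit Arguments. Unset Strict Implicit. Unset Printing Implicit Defensive.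

(* The multiplier error lies in the range of A, on which ‖A'v‖² ≥ s(AA') ‖v‖².
   The optimality conditions ∇f(x⋆) + A'λ⋆ = 0, Ax⋆ = Bx⋆ = 0 and the last inner
   step of FlexPD-F give
     α A'(λ^{k+1} - λ⋆) = [U (x^{k+1,T-1} - x^{k+1,T}) - α (∇f(x^{k+1,T-1}) - ∇f(x^{k+1,T}))]
                        + α [(βA'A - B)(x^{k+1,T} - x⋆) - (∇f(x^{k+1,T}) - ∇f(x⋆))],
   and each bracket is bounded through ‖u + v‖² ≤ t ‖u‖² + t/(t-1) ‖v‖² (with
   t = d, e, g), ‖Mv‖² ≤ ρ(M²) ‖v‖² for symmetric M, and the L-Lipschitz gradient.
   Both spectral bounds follow from the complex spectral theorem applied to the
   Gram matrix XX', whose eigenvalues are real and nonnegative. *)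

Lemma sqrD_le_weighted (R : realFieldType) (t a b : R) : 1 < t ->
  (a + b) ^+ 2 <= t * a ^+ 2 + t / (t - 1) * b ^+ 2.
Proof.
rewrite -subr_gt0 => t1_gt0; rewrite -subr_ge0.
have -> : t * a ^+ 2 + t / (t - 1) * b ^+ 2 - (a + b) ^+ 2
    = ((t - 1) * a - b) ^+ 2 / (t - 1).
  by field; rewrite gt_eqF.
by rewrite divr_ge0 ?sqr_ge0 ?ltW.
Qed.

Section SquaredNorm.
Variables (R : realType) (p : nat).
Implicit Types (u v : 'cV[R]_p).

Lemma sqnormE v : sqnorm v = (v^T *m v) 0 0.
Proof. by rewrite mxE; apply: eq_bigr => i _; rewrite mxE expr2. Qed.

Lemma sqnormN v : sqnorm (- v) = sqnorm v.
Proof. by apply: eq_bigr => i _; rewrite mxE sqrrN. Qed.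

Lemma sqnormZ (a : R) v : sqnorm (a *: v) = a ^+ 2 * sqnorm v.
Proof. by rewrite /sqnorm mulr_sumr; apply: eq_bigr => i _; rewrite mxE exprMn. Qed.

Lemma sqnormD_le_weighted (t : R) u v : 1 < t ->
  sqnorm (u + v) <= t * sqnorm u + t / (t - 1) * sqnorm v.
Proof.
move=> t_gt1; rewrite /sqnorm !mulr_sumr -big_split /=; apply: ler_sum => i _.
by rewrite mxE sqrD_le_weighted.
Qed.

End SquaredNorm.

Section GramSpectral.
Local Open Scope sesquilinear_scope.
Variables (R : realType) (p q : nat) (X : 'M[R]_(p, q)).
Local Notation toC := (real_complex R).
Let G := map_mx toC (X *m X^T).
Let P := spectralmx G.
Let D := spectral_diag G.

(* The rows of [P] form a unitary eigenbasis of XX' over R[i]: [gram_eig i] is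
   the i-th eigenvalue (real, as XX' is hermitian) and [gram_weight v i] the
   squared modulus of the i-th coordinate of v in that basis. *)
Definition gram_eig (i : 'I_p) : R := complex.Re (D 0 i).

Definition gram_weight (v : 'cV[R]_p) (i : 'I_p) : R :=
  let z := (P *m map_mx toC v) i 0 in complex.Re z ^+ 2 + complex.Im z ^+ 2.

Lemma gram_weight_ge0 v i : 0 <= gram_weight v i.
Proof. exact: addr_ge0 (sqr_ge0 _) (sqr_ge0 _). Qed.

Let trmxC_toC m n (M : 'M[R]_(m, n)) : (map_mx toC M)^t* = map_mx toC M^T.
Proof. by apply/matrixP => i j; rewrite !mxE conj_Creal // complex_real. Qed.

Let trmxC_mul m n l (M : 'M[R[i]]_(m, n)) (N : 'M[R[i]]_(n, l)) :
  (M *m N)^t* = N^t* *m M^t*.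
Proof. by rewrite trmx_mul map_mxM. Qed.

Let G_herm : G \is hermsymmx.
Proof.
by apply/is_hermitianmxP; rewrite expr0 scale1r trmxC_toC trmx_mul trmxK.
Qed.

Let P_unitary : P \is unitarymx. Proof. exact: spectral_unitarymx. Qed.

Let G_diag : G = P^t* *m diag_mx D *m P.
Proof.
by rewrite -invmx_unitary //; apply/orthomx_spectralP/hermitian_normalmx.
Qed.

Let toC_gram_eig i : toC (gram_eig i) = D 0 i.
Proof.
by apply: RRe_real; apply/(mxOverP (hermitian_spectral_diag_real G_herm)).
Qed.

Let toC_gram_weight v i :
  toC (gram_weight v i) = `|(P *m map_mx toC v) i 0| ^+ 2.
Proof. by rewrite add_Re2_Im2. Qed.

Let quad_diag (d : 'rV[R[i]]_p) (v : 'cV[R]_p) :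
  ((map_mx toC v)^T *m (P^t* *m diag_mx d *m P) *m map_mx toC v) 0 0
  = \sum_i d 0 i * toC (gram_weight v i).
Proof.
set w := P *m map_mx toC v.
have -> : (map_mx toC v)^T *m (P^t* *m diag_mx d *m P) *m map_mx toC v
    = w^t* *m diag_mx d *m w.
  by rewrite /w trmxC_mul trmxC_toC map_trmx !mulmxA.
rewrite mxE; apply: eq_bigr => j _.
by rewrite mul_mx_diag toC_gram_weight normCK !mxE; ring.
Qed.

Lemma gram_quadE (v : 'cV[R]_p) :
  (v^T *m (X *m X^T) *m v) 0 0 = \sum_i gram_eig i * gram_weight v i.
Proof.
apply: complexI; rewrite rmorph_sum.
under eq_bigr do rewrite rmorphM /= toC_gram_eig.
by rewrite -quad_diag -G_diag /G map_trmx -!map_mxM [RHS]mxE.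
Qed.

Lemma gram_sqnormE (v : 'cV[R]_p) : sqnorm v = \sum_i gram_weight v i.
Proof.
apply: complexI.
transitivity (((map_mx toC v)^T *m (P^t* *m diag_mx (const_mx 1) *m P)
                 *m map_mx toC v) 0 0).
  rewrite diag_const_mx mulmx1 -invmx_unitary // mulVmx ?spectral_unit //.
  rewrite mulmx1 mxE rmorph_sum; apply: eq_bigr => j _.
  by rewrite !mxE rmorphXn expr2.
by rewrite quad_diag rmorph_sum; apply: eq_bigr => i _; rewrite mxE mul1r.
Qed.

Let row_eigen i : row i P *m G = D 0 i *: row i P.
Proof.
have PG : P *m G = diag_mx D *m P.
  by rewrite G_diag !mulmxA (unitarymxP P_unitary) mul1mx.
by rewrite -row_mul PG row_mul row_diag_mx -scalemxAl -rowE.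
Qed.

Let row_dot i : (row i P *m (row i P)^t*) 0 0 = 1.
Proof. by rewrite -dotmxE (row_unitarymxP P_unitary) eqxx. Qed.

Lemma gram_eig_eigenvalue i : eigenvalue (X *m X^T) (gram_eig i).
Proof.
rewrite eigenvalue_root_char -(fmorph_root toC) map_char_poly /= -/G toC_gram_eig.
rewrite -eigenvalue_root_char; apply/eigenvalueP; exists (row i P) => //.
by apply: contra_eq_neq (row_dot i) => ->; rewrite mul0mx mxE eq_sym oner_neq0.
Qed.

Lemma gram_eigenvalueP a : eigenvalue (X *m X^T) a -> exists i, gram_eig i = a.
Proof.
rewrite eigenvalue_root_char -(fmorph_root toC) map_char_poly -/G.
rewrite -eigenvalue_root_char => /eigenvalueP [u uG u_neq0].
set z := u *m P^t*.
have zD : z *m diag_mx D = toC a *: z.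
  transitivity (u *m G *m P^t*); first by rewrite G_diag !mulmxA mulmxtVK.
  by rewrite uG scalemxAl.
have [j zj_neq0] : exists j, z 0 j != 0.
  apply/existsP; apply: contraR u_neq0 => /existsPn z0.
  have -> : u = z *m P by rewrite /z mulmxKtV.
  suff -> : z = 0 by rewrite mul0mx.
  by apply/rowP => j; rewrite [RHS]mxE; apply/eqP; have := z0 j; rewrite negbK.
exists j; apply: complexI; rewrite toC_gram_eig.
have /rowP/(_ j) := zD; rewrite mul_mx_diag mxE [RHS]mxE => zDj.
by apply: (mulIf zj_neq0); rewrite mulrC zDj.
Qed.

(* λ_i = ‖p_i X‖² for the i-th eigenvector p_i: hence λ_i ≥ 0, and p_i X = 0
   when λ_i = 0, so that p_i is orthogonal to the range of X. *)
Let toC_gram_eig_dot i : let z := row i P *m map_mx toC X in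
  toC (gram_eig i) = (z *m z^t*) 0 0.
Proof.
move=> z; rewrite {}/z toC_gram_eig -[LHS]mulr1 -(row_dot i) trmxC_mul trmxC_toC.
rewrite !mulmxA -(mulmxA _ (map_mx toC X)) -map_mxM -/G row_eigen.
by rewrite -scalemxAl [RHS]mxE.
Qed.

Lemma gram_eig_ge0 i : 0 <= gram_eig i.
Proof.
rewrite -ler0c toC_gram_eig_dot mxE; apply: sumr_ge0 => k _.
by rewrite !mxE mul_conjC_ge0.
Qed.

Lemma gram_weight_ker (y : 'cV[R]_q) i :
  gram_eig i = 0 -> gram_weight (X *m y) i = 0.
Proof.
set z := row i P *m map_mx toC X => eig0.
have z0 : z = 0.
  have zz : (z *m z^t*) 0 0 = 0 by rewrite -toC_gram_eig_dot eig0.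
  apply/rowP => k; move/eqP: zz; rewrite mxE psumr_eq0 => [|k' _].
    by move=> /allP/(_ k (mem_index_enum k)); rewrite !mxE mul_conjC_eq0 => /eqP.
  by rewrite !mxE mul_conjC_ge0.
apply: complexI; rewrite toC_gram_weight.
have -> : (P *m map_mx toC (X *m y)) i 0 = (z *m map_mx toC y) 0 0.
  by rewrite /z -mulmxA -map_mxM -row_mul [RHS]mxE.
by rewrite z0 mul0mx mxE normr0 expr0n.
Qed.

End GramSpectral.

Section GramBounds.
Local Open Scope classical_set_scope.
Variables (R : realType) (p q : nat) (X : 'M[R]_(p, q)).

Lemma gram_quad_sqnorm (v : 'cV[R]_p) :
  (v^T *m (X *m X^T) *m v) 0 0 = sqnorm (X^T *m v).
Proof. by rewrite sqnormE trmx_mul trmxK !mulmxA. Qed.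

Lemma gram_eig_le_rho i : gram_eig X i <= rho (X *m X^T).
Proof.
apply: ub_le_sup (gram_eig_eigenvalue X i).
exists (\big[Order.max/0]_j gram_eig X j) => _ /gram_eigenvalueP [j <-].
exact: le_bigmax.
Qed.

Lemma smin_nz_gram_gt0_le i :
  gram_eig X i != 0 -> 0 < smin_nz (X *m X^T) <= gram_eig X i.
Proof.
move=> eig_neq0; set E := [set a | eigenvalue (X *m X^T) a /\ a != 0].
have E_eig : E (gram_eig X i) by split; first exact: gram_eig_eigenvalue.
set m := \big[Order.min/1]_(j | gram_eig X j != 0) gram_eig X j.
have m_gt0 : 0 < m.
  rewrite /m; elim/big_ind: _ => // [a b a_gt0 b_gt0|j]; first by rewrite lt_min a_gt0.
  by rewrite lt_neqAle eq_sym => ->; rewrite gram_eig_ge0.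
have m_lb : lbound E m.
  by move=> _ [/gram_eigenvalueP [j <-] eigj_neq0]; exact: bigmin_le_cond.
apply/andP; split; first exact: lt_le_trans m_gt0 (lb_le_inf (ex_intro _ _ E_eig) m_lb).
by apply: (ge_inf _ E_eig); exists m.
Qed.

Lemma smin_nz_gram_ge0 : 0 <= smin_nz (X *m X^T).
Proof.
set E := [set a | eigenvalue (X *m X^T) a /\ a != 0].
have [E0|/set0P [_ [/gram_eigenvalueP [i <-] eig_neq0]]] := eqVneq E set0.
  by rewrite /smin_nz -/E E0 inf0.
by have /andP [/ltW] := smin_nz_gram_gt0_le eig_neq0.
Qed.

Lemma sqnorm_trmx_mul_le (v : 'cV[R]_p) :
  sqnorm (X^T *m v) <= rho (X *m X^T) * sqnorm v.
Proof.
rewrite -gram_quad_sqnorm gram_quadE (gram_sqnormE X) mulr_sumr.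
by apply: ler_sum => i _; rewrite ler_wpM2r ?gram_weight_ge0 ?gram_eig_le_rho.
Qed.

Lemma sqnorm_mul_le_smin_nz (y : 'cV[R]_q) :
  sqnorm (X *m y) <= (smin_nz (X *m X^T))^-1 * sqnorm (X^T *m (X *m y)).
Proof.
rewrite -gram_quad_sqnorm gram_quadE (gram_sqnormE X) mulr_sumr.
apply: ler_sum => i _; have [eig0|eig_neq0] := eqVneq (gram_eig X i) 0.
  by rewrite gram_weight_ker // !mulr0.
have /andP [s_gt0 s_le] := smin_nz_gram_gt0_le eig_neq0.
by rewrite mulrA ler_peMl ?gram_weight_ge0 // ler_pdivlMl // mulr1.
Qed.

End GramBounds.

Lemma sqnorm_mulmx_le_rho (R : realType) n (M : 'M[R]_n) (v : 'cV[R]_n) :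
  M^T = M -> sqnorm (M *m v) <= rho (M *m M) * sqnorm v.
Proof. by move=> M_sym; have := sqnorm_trmx_mul_le M v; rewrite M_sym. Qed.

Lemma sqnorm_mulmx_sub_le (R : realType) n (M : 'M[R]_n) (K t : R)
    (v w : 'cV[R]_n) :
  M^T = M -> 1 < t -> sqnorm w <= K ^+ 2 * sqnorm v ->
  sqnorm (M *m v - w) <= (t / (t - 1) * rho (M *m M) + t * K ^+ 2) * sqnorm v.
Proof.
move=> M_sym t_gt1 w_le; rewrite [M *m v - w]addrC mulrDl [in leRHS]addrC.
apply: le_trans (sqnormD_le_weighted _ _ t_gt1) _; rewrite sqnormN.
have t_gt0 : 0 < t by apply: lt_trans t_gt1.
apply: lerD; first by rewrite -[in leRHS]mulrA ler_wpM2l // ltW.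
rewrite -[in leRHS]mulrA ler_wpM2l ?sqnorm_mulmx_le_rho //.
by rewrite divr_ge0 ?subr_ge0 ?ltW.
Qed.

Lemma sqrB_le_derive_bound (R : realType) (h : R -> R) (L : R) :
  (forall x, derivable h x 1) -> (forall x, `|derive1 h x| <= L) ->
  forall a b, (h a - h b) ^+ 2 <= L ^+ 2 * (a - b) ^+ 2.
Proof.
move=> h_der h'_le; suff sqr_le a b : a <= b -> (h a - h b) ^+ 2 <= L ^+ 2 * (a - b) ^+ 2.
  move=> a b; have [/sqr_le //|/ltW/sqr_le] := leP a b.
  by rewrite -sqrrN opprB -[(a - b) ^+ 2]sqrrN opprB.
move=> le_ab; rewrite -sqrrN opprB -[(a - b) ^+ 2]sqrrN opprB.
have [c _ ->] := MVT_segment le_ab (fun x _ => derivableP (h_der x))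
  (derivable_within_continuous (fun x _ => h_der x)).
have h'c_le : `|'D_1 h c| <= L by rewrite -derive1E.
rewrite exprMn ler_wpM2r ?sqr_ge0 // -real_normK ?num_real //.
by rewrite ler_sqr ?nnegrE ?(le_trans _ h'c_le).
Qed.

Lemma sqnorm_grad_sub_le (R : realType) n (f : 'I_n -> R -> R) (L : R)
    (x y : 'cV[R]_n) :
  (forall i x, derivable (derive1 (f i)) x 1) ->
  (forall i x, `|derive1 (derive1 (f i)) x| <= L) ->
  sqnorm (grad f x - grad f y) <= L ^+ 2 * sqnorm (x - y).
Proof.
move=> f'_der f''_le; rewrite /sqnorm mulr_sumr; apply: ler_sum => i _.
by rewrite !mxE; apply: sqrB_le_derive_bound.
Qed.

Lemma flexpd_multiplier_range (R : realType) n eps (alpha beta : R) (T : nat)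
    (A : 'M[R]_(eps, n)) (B : 'M[R]_n) (f : 'I_n -> R -> R) (x0 : 'cV[R]_n) k :
  exists z, (flexpd alpha beta T A B f x0 k).2 = A *m z.
Proof.
elim: k => [|k [z IHk]]; first by exists 0; rewrite mulmx0.
by eexists; rewrite /= IHk scalemxAr -mulmxDr.
Qed.

Lemma dual_error_decomposition (R : comRingType) n eps (A : 'M[R]_(eps, n))
    (B : 'M[R]_n) (alpha beta : R) (x1 x xs g1 gx gs : 'cV[R]_n)
    (lam ls : 'cV[R]_eps) :
  x = (1%:M - alpha *: B) *m x1 - alpha *: g1 - alpha *: (A^T *m lam) ->
  A *m xs = 0 -> B *m xs = 0 -> gs + A^T *m ls = 0 ->
  alpha *: (A^T *m (lam + beta *: (A *m x) - ls)) =
    ((1%:M - alpha *: B) *m (x1 - x) - alpha *: (g1 - gx))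
    + alpha *: ((beta *: (A^T *m A) - B) *m (x - xs) - (gx - gs)).
Proof.
move=> x_step Axs Bxs kkt.
have lamE : alpha *: (A^T *m lam) = (1%:M - alpha *: B) *m x1 - alpha *: g1 - x.
  by rewrite x_step opprB addrC subrK.
have lsE : A^T *m ls = - gs by apply/eqP; rewrite -addr_eq0 addrC kkt.
rewrite mulmxBr mulmxDr lsE -scalemxAr !scalerDr lamE mulmxBr.
rewrite [(_ - _) *m x]mulmxBl mul1mx mulmxBr !mulmxBl -!scalemxAl -!mulmxA.
rewrite Axs Bxs mulmx0 scaler0.
move: ((1%:M - alpha *: B) *m x1) (A^T *m (A *m x)) (B *m x) => Ux1 AAx Bx.
by apply/matrixP => i j; rewrite !mxE; ring.
Qed.

Lemma dual_residual_le (R : realType) n eps (A : 'M[R]_(eps, n)) (B : 'M[R]_n)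
    (f : 'I_n -> R -> R) (L alpha beta d e g : R) (x1 x xs : 'cV[R]_n)
    (lam ls : 'cV[R]_eps) :
  B^T = B -> 1 < d -> 1 < e -> 1 < g ->
  (forall i x, derivable (derive1 (f i)) x 1) ->
  (forall i x, `|derive1 (derive1 (f i)) x| <= L) ->
  x = pstep alpha A B f lam x1 ->
  A *m xs = 0 -> B *m xs = 0 -> grad f xs + A^T *m ls = 0 ->
  alpha ^+ 2 * sqnorm (A^T *m (lam + beta *: (A *m x) - ls))
    <= d * ((e / (e - 1) * rho ((1%:M - alpha *: B) *m (1%:M - alpha *: B))
             + e * (alpha * L) ^+ 2) * sqnorm (x1 - x))
     + d / (d - 1) * (alpha ^+ 2
         * ((g / (g - 1) * rho ((beta *: (A^T *m A) - B) *m (beta *: (A^T *m A) - B))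
             + g * L ^+ 2) * sqnorm (x - xs))).
Proof.
move=> B_sym d_gt1 e_gt1 g_gt1 f'_der f''_le x_step Axs Bxs kkt.
have U_sym : (1%:M - alpha *: B)^T = 1%:M - alpha *: B.
  by rewrite linearB /= trmx1 linearZ /= B_sym.
have M_sym : (beta *: (A^T *m A) - B)^T = beta *: (A^T *m A) - B.
  by rewrite linearB /= linearZ /= trmx_mul trmxK B_sym.
have gradZ_le : sqnorm (alpha *: (grad f x1 - grad f x))
    <= (alpha * L) ^+ 2 * sqnorm (x1 - x).
  by rewrite sqnormZ exprMn -[in leRHS]mulrA ler_wpM2l ?sqr_ge0 ?sqnorm_grad_sub_le.
have primal_le := sqnorm_mulmx_sub_le U_sym e_gt1 gradZ_le.
have opt_le := sqnorm_mulmx_sub_le M_sym g_gt1 (sqnorm_grad_sub_le x xs f'_der f''_le).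
rewrite -sqnormZ (dual_error_decomposition beta (grad f x) x_step Axs Bxs kkt).
apply: le_trans (sqnormD_le_weighted _ _ d_gt1) _; rewrite sqnormZ.
have d_gt0 : 0 < d by apply: lt_trans d_gt1.
apply: lerD; first by apply: ler_wpM2l; [exact: ltW | exact: primal_le].
apply: ler_wpM2l; first by rewrite divr_ge0 ?subr_ge0 ?ltW.
by apply: ler_wpM2l; [exact: sqr_ge0 | exact: opt_le].
Qed.

Theorem lemma3p5 (R : realType) (n eps : nat) (E : 'I_eps -> 'I_n * 'I_n)
  (B : 'M[R]_n) (f : 'I_n -> R -> R) (m L alpha beta : R) (T : nat)
  (x0 xs : 'cV[R]_n) (ls : 'cV[R]_eps) (d e g : R) :
  simple_graph E -> connected_graph E ->
  (* B symmetric PSD, same null space as A, sparsity pattern of the graph *)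
  B^T = B ->
  (forall v : 'cV[R]_n, 0 <= (v^T *m B *m v) 0 0) ->
  (forall v : 'cV[R]_n, B *m v = 0 <-> incidence R E *m v = 0) ->
  (forall i j : 'I_n, i != j -> B i j != 0 -> adj E i j) ->
  (* local functions: twice differentiable, m <= f_i'' <= L *)
  0 < m -> m <= L ->
  (forall i x, derivable (f i) x 1) ->
  (forall i x, derivable (derive1 (f i)) x 1) ->
  (forall i x, m <= derive1 (derive1 (f i)) x <= L) ->
  (* x* is the unique minimizer of f subject to A x = 0 *)
  incidence R E *m xs = 0 ->
  (forall x : 'cV[R]_n, incidence R E *m x = 0 ->
     \sum_i f i (xs i 0) <= \sum_i f i (x i 0)) ->
  (forall x : 'cV[R]_n, incidence R E *m x = 0 ->
     \sum_i f i (x i 0) <= \sum_i f i (xs i 0) -> x = xs) ->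
  (* Lagrange multiplier in the column space of A *)
  grad f xs + (incidence R E)^T *m ls = 0 ->
  B *m xs = 0 ->
  (exists y : 'cV[R]_n, ls = incidence R E *m y) ->
  (* parameters *)
  0 < alpha -> 0 < beta -> (1 <= T)%N ->
  alpha < 1 / rho B ->
  1 < d -> 1 < e -> 1 < g ->
  forall k : nat,
    let A := incidence R E in
    let U := 1%:M - alpha *: B in
    let p := flexpd alpha beta T A B f x0 k in
    let xT1 := inner alpha A B f p.2 p.1 (T - 1) in
    let xT := inner alpha A B f p.2 p.1 T in
    let lam1 := (flexpd alpha beta T A B f x0 k.+1).2 in
    sqnorm (lam1 - ls) <=
      d / (alpha ^+ 2 * smin_nz (A *m A^T))
        * (e / (e - 1) * rho (U *m U) + e * alpha ^+ 2 * L ^+ 2)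
        * sqnorm (xT1 - xT)
    + d / ((d - 1) * alpha ^+ 2 * smin_nz (A *m A^T))
        * (g / (g - 1) * alpha ^+ 2
             * rho ((beta *: (A^T *m A) - B) *m (beta *: (A^T *m A) - B))
           + g * alpha ^+ 2 * L ^+ 2)
        * sqnorm (xT - xs).
Proof.
move=> _ _ B_sym _ _ _ m_gt0 _ _ f'_der f''_bound Axs _ _ kkt Bxs [y ls_range].
move=> alpha_gt0 _ T_ge1 _ d_gt1 e_gt1 g_gt1 k; cbv zeta.
set A := incidence R E; set pk := flexpd alpha beta T A B f x0 k.
set xT1 := inner alpha A B f pk.2 pk.1 (T - 1); set xT := inner alpha A B f pk.2 pk.1 T.
have f''_le i x : `|derive1 (derive1 (f i)) x| <= L.
  by have /andP [f''_ge f''_le] := f''_bound i x; rewrite ger0_norm ?(le_trans (ltW m_gt0)).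
have xT_step : xT = pstep alpha A B f pk.2 xT1.
  by rewrite /xT /xT1 /inner -[in LHS](subnK T_ge1) addn1 iterS.
have [z pk_range] := flexpd_multiplier_range alpha beta T A B f x0 k.
have dual_le : sqnorm (pk.2 + beta *: (A *m xT) - ls)
    <= (smin_nz (A *m A^T))^-1 * sqnorm (A^T *m (pk.2 + beta *: (A *m xT) - ls)).
  have -> : pk.2 + beta *: (A *m xT) - ls = A *m (z + beta *: xT - y).
    by rewrite pk_range ls_range !mulmxBr mulmxDr scalemxAr.
  exact: sqnorm_mul_le_smin_nz.
have residual_le := dual_residual_le beta B_sym d_gt1 e_gt1 g_gt1 f'_der f''_le
  xT_step Axs Bxs kkt.
have alpha2_neq0 : alpha ^+ 2 != 0 by rewrite expf_neq0 ?gt_eqF.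
apply: le_trans dual_le _; rewrite -[sqnorm (A^T *m _)](mulKf alpha2_neq0).
apply: le_trans (ler_wpM2l _ (ler_wpM2l _ residual_le)) _.
- by rewrite invr_ge0 smin_nz_gram_ge0.
- by rewrite invr_ge0 sqr_ge0.
rewrite le_eqVlt; apply/orP; left; apply/eqP; rewrite !invfM; ring.
Qed.
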